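(* Let $R$ be a finite commutative Frobenius ring of characteristic $2$, let $G=\{g_1,\dots,g_n\}$ be a finite abelian group of order $n$ and exponent $2$ with a fixed listing of its elements, let $v_1\neq v_2$ be elements of $RG$, and let $A$ be an $n\times n$ reverse circulant matrix over $R$. Let $C_\sigma$ be the code over $R$ generated by $$M(\sigma)=\left(\, I_{2n} \;\middle|\; \begin{matrix} \sigma(v_1) & \sigma(v_2)+A\\ \sigma(v_2)+A & \sigma(v_1)\end{matrix}\,\right).$$ If $\sigma(v_1)$ and $\sigma(v_2)$ are circulant matrices and $\sigma((v_1+v_2)^2)+A^2=I_n$, then $C_\sigma$ is a self-dual code of length $4n$.
   Context: For $v=\sum_{g\in G}\alpha_g g\in RG$, $\sigma(v)$ is the $n\times n$ matrix over $R$ whose $(i,j)$ entry is $\alpha_{g_i^{-1}g_j}$. An $n\times n$ matrix $(a_{ij})$ is circulant if $a_{ij}$ depends only on $(j-i)\bmod n$, and reverse circulant if $a_{ij}$ depends only on $(i+j)\bmod n$. The code generated by a matrix is the $R$-submodule spanned by its rows; it is self-dual if it equals its dual with respect to the Euclidean inner product $\langle x,y\rangle=\sum_i x_iy_i$. *)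

From HB Require Import structures.
From mathcomp Require Import all_boot all_order all_fingroup all_algebra all_solvable.
From mathcomp Require Import algC.
Set Implicit Arguments. Unset Strict Implicit. Unset Printing Implicit Defensive.
Import GRing.Theory.
Local Open Scope ring_scope.

(* Finite commutative Frobenius ring: admits a generating character, i.e. an
   additive character chi : (R,+) -> C^* whose kernel contains no nonzero
   ideal (for a commutative ring: no nonzero principal ideal aR). *)
Definition frobenius_ring (R : finComNzRingType) : Prop :=
  exists chi : R -> algC,
    [/\ chi 0 = 1,
        forall x y : R, chi (x + y) = chi x * chi y &
        forall a : R, a != 0 -> exists x : R, chi (a * x) != 1].

Definition groupring (R : Type) (gT : finGroupType) := {ffun gT -> R}.

Definition gr_mul (R : finComNzRingType) (gT : finGroupType)
  (a b : {ffun gT -> R}) : {ffun gT -> R} :=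
  [ffun h => \sum_(x : gT) a x * b (x^-1 * h)%g].

Definition sigma (R : finComNzRingType) (gT : finGroupType) (n : nat)
  (g : 'I_n -> gT) (v : {ffun gT -> R}) : 'M[R]_n :=
  \matrix_(i < n, j < n) v ((g i)^-1 * g j)%g.

Definition circulant (R : Type) (n : nat) (A : 'M[R]_n) : Prop :=
  forall i j k l : 'I_n, ((j + n - i) %% n = (l + n - k) %% n)%N -> A i j = A k l.

Definition reverse_circulant (R : Type) (n : nat) (A : 'M[R]_n) : Prop :=
  forall i j k l : 'I_n, ((i + j) %% n = (k + l) %% n)%N -> A i j = A k l.

Definition in_code (R : finComNzRingType) (m N : nat) (M : 'M[R]_(m, N))
  (c : 'rV[R]_N) : Prop := exists x : 'rV[R]_m, c = x *m M.

Definition euclid_ip (R : finComNzRingType) (N : nat) (x y : 'rV[R]_N) : R :=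
  \sum_(i < N) x 0 i * y 0 i.

Definition self_dual_code (R : finComNzRingType) (m N : nat) (M : 'M[R]_(m, N))
  : Prop :=
  forall c : 'rV[R]_N,
    in_code M c <-> (forall d : 'rV[R]_N, in_code M d -> euclid_ip c d = 0).

From HB Require Import structures.
From mathcomp Require Import all_boot all_order all_fingroup all_algebra all_solvable.
Set Implicit Arguments. Unset Strict Implicit. Unset Printing Implicit Defensive.
Import GRing.Theory.
Local Open Scope ring_scope.

(* The map sigma is additive and, for a bijective listing of G, multiplicative;
   since G has exponent 2, every sigma(v) is symmetric.  Circulant matrices
   commute, and a circulant C and a reverse circulant A satisfy C A = A C^T,
   so S1 = sigma(v1), S2 = sigma(v2) and A pairwise commute.  In
   characteristic 2 the block matrix B = [S1, S2 + A; S2 + A, S1] is therefore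
   symmetric with B^2 = diag((S1 + S2)^2 + A^2) = I = -I.  Finally [I | B]
   generates a self-dual code whenever B B^T = -I: its rows are orthogonal,
   and a word orthogonal to them is determined by its first half. *)

Section Codes.
Variable R : finComNzRingType.

Lemma euclid_ipE N (c d : 'rV[R]_N) : euclid_ip c d = (c *m d^T) 0 0.
Proof. by rewrite /euclid_ip mxE; apply: eq_bigr => i _; rewrite mxE. Qed.

Lemma orthogonal_codeP m N (M : 'M[R]_(m, N)) (c : 'rV_N) :
  (forall d, in_code M d -> euclid_ip c d = 0) <-> c *m M^T = 0.
Proof.
split=> [orth_c | cMT0 _ [x ->]].
  apply/rowP => i; have := orth_c (delta_mx 0 i *m M) (ex_intro _ _ erefl).
  by rewrite euclid_ipE trmx_mul mulmxA trmx_delta -colE !mxE.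
by rewrite euclid_ipE trmx_mul mulmxA cMT0 mul0mx mxE.
Qed.

Lemma self_dual_row_mx1 m (B : 'M[R]_m) :
  B *m B^T = - 1%:M -> self_dual_code (row_mx 1%:M B).
Proof.
move=> BBT c; apply: (iff_trans _ (iff_sym (orthogonal_codeP _ _))).
rewrite tr_row_mx trmx1.
have BTB : B^T *m B = - 1%:M.
  by apply/eqP; rewrite -eqr_oppLR -mulNmx; apply/eqP/mulmx1C; rewrite mulmxN BBT opprK.
split=> [[x ->] | ].
  by rewrite -mulmxA mul_row_col mulmx1 BBT subrr mulmx0.
rewrite -{1}[c]hsubmxK mul_row_col mulmx1 => /eqP; rewrite addr_eq0 => /eqP c1E.
exists (lsubmx c); rewrite -[LHS]hsubmxK mul_mx_row mulmx1.
by rewrite c1E mulNmx -mulmxA BTB mulmxN mulmx1 opprK.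
Qed.

End Codes.

Section CharTwo.
Variable R : pzRingType.
Hypothesis char2 : 2%:R = 0 :> R.

Lemma addmx_char2 m n (M : 'M[R]_(m, n)) : M + M = 0.
Proof. by apply/matrixP => i j; rewrite !mxE -mulr2n -mulr_natr char2 mulr0. Qed.

Lemma oppmx_char2 m n (M : 'M[R]_(m, n)) : - M = M.
Proof. by apply/esym/eqP; rewrite -addr_eq0 addmx_char2. Qed.

Lemma sqrmxD_char2 n (X Y : 'M[R]_n) :
  X *m Y = Y *m X -> (X + Y) *m (X + Y) = X *m X + Y *m Y.
Proof.
by move=> XY; rewrite mulmxDl !mulmxDr XY addrA -(addrA (X *m X)) addmx_char2 addr0.
Qed.

End CharTwo.

Lemma invg_exponent2 (gT : finGroupType) (x : gT) :
  (exponent [set: gT] %| 2)%N -> (x^-1 = x)%g.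
Proof.
move=> /exponentP/(_ x (in_setT x)); rewrite expgS expg1 => xx1.
by rewrite -[LHS]mulg1 -xx1 mulKg.
Qed.

Section GroupRingMatrix.
Variables (R : finComNzRingType) (gT : finGroupType) (n : nat) (g : 'I_n -> gT).

Lemma sigmaD (v w : {ffun gT -> R}) : sigma g (v + w) = sigma g v + sigma g w.
Proof. by apply/matrixP => i j; rewrite !mxE ffunE. Qed.

Lemma sigmaM (v w : {ffun gT -> R}) :
  bijective g -> sigma g (gr_mul v w) = sigma g v *m sigma g w.
Proof.
case=> g' gK g'K; apply/matrixP => i j; rewrite !mxE ffunE.
rewrite (reindex (fun k => (g i)^-1 * g k)%g) /=.
  by apply: eq_bigr => k _; rewrite !mxE invMg invgK mulgA mulgK.
by exists (fun x => g' (g i * x)%g) => [k _ | x _]; rewrite ?mulKVg ?gK // g'K mulKg.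
Qed.

Lemma tr_sigma (v : {ffun gT -> R}) :
  (forall x : gT, x^-1 = x)%g -> (sigma g v)^T = sigma g v.
Proof.
move=> invgE; apply/matrixP => i j; rewrite !mxE; congr (v _).
by rewrite -[RHS]invgE invMg invgK.
Qed.

End GroupRingMatrix.

Section Circulant.
Variables (R : Type) (n : nat).

Lemma circulantE (C : 'M[R]_n.+1) : circulant C -> forall i j, C i j = C 0 (j - i).
Proof.
move=> circC i j; apply: circC; rewrite subn0 modnDr.
by rewrite /= modnDmr addnBA 1?ltnW // modn_mod.
Qed.

Lemma reverse_circulantE (A : 'M[R]_n.+1) :
  reverse_circulant A -> forall i j, A i j = A 0 (i + j).
Proof. by move=> revA i j; apply: revA; rewrite /= modn_mod. Qed.

Lemma tr_reverse_circulant (A : 'M[R]_n) : reverse_circulant A -> A^T = A.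
Proof. by move=> revA; apply/matrixP => i j; rewrite mxE; apply: revA; rewrite addnC. Qed.

End Circulant.

Section CirculantProducts.
Variable R : comPzRingType.

Lemma circulant_mulmxC n (C D : 'M[R]_n) :
  circulant C -> circulant D -> C *m D = D *m C.
Proof.
case: n C D => [|n] C D circC circD; first by apply/matrixP => -[].
apply/matrixP => i j; rewrite !mxE (reindex_inj (subrI (i + j))) /=.
apply: eq_bigr => k _; rewrite mulrC (circulantE circC i) (circulantE circC k).
rewrite (circulantE circD i) (circulantE circD (i + j - k)).
by rewrite opprB addrA [j + k]addrC [i + j]addrC addrKA addrAC addrK.
Qed.

Lemma circulant_rev_mulmx n (C A : 'M[R]_n) :
  circulant C -> reverse_circulant A -> C *m A = A *m C^T.
Proof.
case: n C A => [|n] C A circC revA; first by apply/matrixP => -[].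
apply/matrixP => i j; rewrite !mxE (reindex_inj (addIr (i - j))) /=.
apply: eq_bigr => k _; rewrite mxE mulrC (circulantE circC i) (circulantE circC j).
rewrite (reverse_circulantE revA i) (reverse_circulantE revA (k + (i - j))).
by rewrite -addrA addrNK addrC addrCA [_ + (_ - _)]addrC addrK.
Qed.

End CirculantProducts.

Theorem mainTheorem6 (R : finComNzRingType) (gT : finGroupType) (n : nat)
  (g : 'I_n -> gT) (v1 v2 : {ffun gT -> R}) (A : 'M[R]_n) :
  frobenius_ring R ->
  (2%:R : R) = 0 ->
  abelian [set: gT] ->
  exponent [set: gT] = 2%N ->
  bijective g ->
  v1 != v2 ->
  reverse_circulant A ->
  circulant (sigma g v1) ->
  circulant (sigma g v2) ->
  sigma g (gr_mul (v1 + v2) (v1 + v2)) + A *m A = 1%:M ->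
  self_dual_code
    (row_mx (1%:M : 'M[R]_(n + n))
       (block_mx (sigma g v1) (sigma g v2 + A)
                 (sigma g v2 + A) (sigma g v1))).
Proof.
move=> _ char2 _ expG g_bij _ revA circ1 circ2 sqr_sum.
rewrite sigmaM // sigmaD in sqr_sum.
set S1 := sigma g v1 in circ1 sqr_sum *; set S2 := sigma g v2 in circ2 sqr_sum *.
have invgE (x : gT) : (x^-1 = x)%g by apply: invg_exponent2; rewrite expG.
have trS1 : S1^T = S1 by apply: tr_sigma.
have trS2 : S2^T = S2 by apply: tr_sigma.
have S1S2 : S1 *m S2 = S2 *m S1 by apply: circulant_mulmxC.
have S1A : S1 *m A = A *m S1 by rewrite circulant_rev_mulmx ?trS1.
have S2A : S2 *m A = A *m S2 by rewrite circulant_rev_mulmx ?trS2.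
have S1T : S1 *m (S2 + A) = (S2 + A) *m S1 by rewrite mulmxDr mulmxDl S1S2 S1A.
have diag : S1 *m S1 + (S2 + A) *m (S2 + A) = 1%:M.
  by rewrite sqrmxD_char2 // addrA -sqrmxD_char2.
apply: self_dual_row_mx1.
rewrite tr_block_mx trS1 linearD /= trS2 tr_reverse_circulant // mulmx_block diag.
rewrite [(S2 + A) *m S1 + _]addrC -S1T addmx_char2 //.
by rewrite [_ + S1 *m S1]addrC diag scalar_mx_block oppmx_char2.
Qed.
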